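(* Let $L$ be a $\kappa$-frame. The map $\nabla_\bullet\colon \mathfrak{H}_\kappa L \to \mathbb{C} L$, $I \mapsto \nabla_I$, is an injective frame homomorphism.
   Context: $\kappa$ is a fixed regular cardinal; a $\kappa$-set is a set of cardinality $<\kappa$. A $\kappa$-frame is a bounded distributive lattice having joins of all $\kappa$-subsets and satisfying $x\wedge\bigvee S=\bigvee_{s\in S}(x\wedge s)$ for $\kappa$-subsets $S$. A $\kappa$-ideal of $L$ is a downset $I\subseteq L$ such that every $\kappa$-subset of $I$ has an upper bound in $I$; $\mathfrak{H}_\kappa L$ is the frame of $\kappa$-ideals of $L$ ordered by inclusion. A congruence on $L$ is an equivalence relation on $L$ which is also a sub-$\kappa$-frame of $L\times L$; $\mathbb{C}L$ denotes the frame of congruences ordered by inclusion. For $a\in L$, $\nabla_a=\{(x,y)\mid x\vee a=y\vee a\}$ (the congruence generated by $(0,a)$), and for a $\kappa$-ideal $I$, $\nabla_I=\bigvee_{a\in I}\nabla_a$ in $\mathbb{C}L$. *)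

From Stdlib Require Import Classical.

Set Implicit Arguments.

(** * Cardinals.  A cardinal kappa is represented by a type K with |K| = kappa. *)

Definition injective_fun {A B : Type} (f : A -> B) : Prop :=
  forall x y, f x = f y -> x = y.

Definition card_lt (X K : Type) : Prop :=
  (exists f : X -> K, injective_fun f) /\ ~ (exists g : K -> X, injective_fun g).

Definition regular_card (K : Type) : Prop :=
  (exists f : nat -> K, injective_fun f) /\
  (forall (I : Type) (A : I -> Type),
      card_lt I K -> (forall i, card_lt (A i) K) -> card_lt {i : I & A i} K).

Definition kset (K : Type) {T : Type} (S : T -> Prop) : Prop :=
  card_lt {x : T | S x} K.

Definition is_lub {T : Type} (le : T -> T -> Prop) (S : T -> Prop) (s : T) : Prop :=
  (forall x, S x -> le x s) /\ (forall u, (forall x, S x -> le x u) -> le s u).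

Record kFrame (K : Type) := {
  kcar :> Type;
  kle : kcar -> kcar -> Prop;
  kle_refl : forall x, kle x x;
  kle_trans : forall x y z, kle x y -> kle y z -> kle x z;
  kle_antisym : forall x y, kle x y -> kle y x -> x = y;
  kbot : kcar;
  ktop : kcar;
  kmeet : kcar -> kcar -> kcar;
  kjoin : kcar -> kcar -> kcar;
  kbot_le : forall x, kle kbot x;
  kle_top : forall x, kle x ktop;
  kmeet_glb : forall x y z, kle z (kmeet x y) <-> (kle z x /\ kle z y);
  kjoin_lub : forall x y z, kle (kjoin x y) z <-> (kle x z /\ kle y z);
  kdistr : forall x y z, kmeet x (kjoin y z) = kjoin (kmeet x y) (kmeet x z);
  ksup_ex : forall S : kcar -> Prop, kset K S -> exists s, is_lub kle S s;
  kframe_distr : forall (x : kcar) (S : kcar -> Prop) (s : kcar),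
      kset K S -> is_lub kle S s ->
      is_lub kle (fun t => exists u, S u /\ t = kmeet x u) (kmeet x s)
}.

Arguments kle {K} _ _ _.
Arguments kbot {K} _.
Arguments ktop {K} _.
Arguments kmeet {K} _ _ _.
Arguments kjoin {K} _ _ _.

Section Defs.
Variables (K : Type) (L : kFrame K).

Definition kideal (I : L -> Prop) : Prop :=
  (forall x y, kle L x y -> I y -> I x) /\
  (forall S : L -> Prop, kset K S -> (forall x, S x -> I x) ->
     exists u, I u /\ forall x, S x -> kle L x u).

(** Congruences: equivalence relations that are sub-kappa-frames of L x L.
    Joins in L x L are computed componentwise. *)
Definition congruence (C : L -> L -> Prop) : Prop :=
  (forall x, C x x) /\
  (forall x y, C x y -> C y x) /\
  (forall x y z, C x y -> C y z -> C x z) /\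
  C (kbot L) (kbot L) /\ C (ktop L) (ktop L) /\
  (forall a b c d, C a b -> C c d -> C (kmeet L a c) (kmeet L b d)) /\
  (forall a b c d, C a b -> C c d -> C (kjoin L a c) (kjoin L b d)) /\
  (forall (S : (L * L)%type -> Prop) (s t : L),
      kset K S -> (forall p, S p -> C (fst p) (snd p)) ->
      is_lub (kle L) (fun x => exists y, S (x, y)) s ->
      is_lub (kle L) (fun y => exists x, S (x, y)) t ->
      C s t).

Definition nabla (a : L) : L -> L -> Prop :=
  fun x y => kjoin L x a = kjoin L y a.

Definition cong_gen (R : L -> L -> Prop) : L -> L -> Prop :=
  fun x y => forall C, congruence C -> (forall a b, R a b -> C a b) -> C x y.

(** nabla_I = \/_{a in I} nabla_a, the join taken in CL. *)
Definition nablaI (I : L -> Prop) : L -> L -> Prop :=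
  cong_gen (fun x y => exists a, I a /\ nabla a x y).

End Defs.

(** Inclusion orders on H_kappa L (subsets) and CL (relations). *)
Definition set_le {T : Type} (I J : T -> Prop) : Prop := forall x, I x -> J x.
Definition rel_le {T : Type} (R S : T -> T -> Prop) : Prop :=
  forall x y, R x y -> S x y.

Definition lub_in {A X : Type} (leA : A -> A -> Prop) (P : A -> Prop)
  (F : X -> A) (m : A) : Prop :=
  P m /\ (forall j, leA (F j) m) /\
  (forall u, P u -> (forall j, leA (F j) u) -> leA m u).

Definition glb_in {A X : Type} (leA : A -> A -> Prop) (P : A -> Prop)
  (F : X -> A) (m : A) : Prop :=
  P m /\ (forall j, leA m (F j)) /\
  (forall u, P u -> (forall j, leA u (F j)) -> leA u m).

(* For a kappa-ideal I, the union of the congruences nabla_a over a in I is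
   already a congruence: any kappa-set of pairs, each related by some nabla_a
   with a in I, is related by the single nabla_c, where c in I bounds the
   chosen witnesses, and nabla_c is a congruence.  Hence nabla_I relates x, y
   iff x \/ a = y \/ a for some a in I, and nabla_I relates a to 0 iff a is in
   I, which gives injectivity.  Binary meets are preserved by distributivity,
   x \/ (a /\ b) = (x \/ a) /\ (x \/ b), and joins because the kernel
   {a | a ~ 0} of any congruence is a kappa-ideal. *)

From Stdlib Require Import Classical ClassicalEpsilon.
Set Implicit Arguments.

Lemma card_lt_inj (X Y K : Type) (h : X -> Y) :
  injective_fun h -> card_lt Y K -> card_lt X K.
Proof.
  intros Hh [[f Hf] HnY]. split.
  - exists (fun x => f (h x)). intros x y E. apply Hh, Hf, E.
  - intros [g Hg]. apply HnY. exists (fun k => h (g k)).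
    intros k l E. apply Hg, Hh, E.
Qed.

Lemma card_lt_bool (K : Type) : regular_card K -> card_lt bool K.
Proof.
  intros [[f Hf] _]. split.
  - exists (fun b : bool => if b then f 0 else f 1).
    intros [|] [|] E; try reflexivity; apply Hf in E; discriminate.
  - intros [g Hg].
    assert (Hnat : injective_fun (fun n => g (f n))).
    { intros n m E. apply Hf, Hg, E. }
    destruct (g (f 0)) eqn:E0, (g (f 1)) eqn:E1, (g (f 2)) eqn:E2;
      first [ assert (0 = 1) by (apply Hnat; congruence)
            | assert (0 = 2) by (apply Hnat; congruence)
            | assert (1 = 2) by (apply Hnat; congruence) ]; discriminate.
Qed.

Lemma sig_eq (T : Type) (P : T -> Prop) (x y : {z | P z}) :
  proj1_sig x = proj1_sig y -> x = y.
Proof.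
  destruct x as [x px], y as [y py]; simpl; intros ->.
  f_equal; apply proof_irrelevance.
Qed.

Lemma kset_empty (K T : Type) : regular_card K -> kset K (fun _ : T => False).
Proof.
  intros HK. apply (card_lt_inj (h := fun _ => true)); [| exact (card_lt_bool HK)].
  intros [x []].
Qed.

Lemma kset_pair (K T : Type) (a b : T) :
  regular_card K -> kset K (fun x => x = a \/ x = b).
Proof.
  intros HK.
  apply (card_lt_inj (h := fun p => if excluded_middle_informative (proj1_sig p = a)
                               then true else false));
    [| exact (card_lt_bool HK)].
  intros [p Hp] [q Hq]; simpl; intros E; apply sig_eq; simpl.
  destruct (excluded_middle_informative (p = a)),
           (excluded_middle_informative (q = a)); try discriminate;
    destruct Hp, Hq; congruence.
Qed.

Lemma kset_image (K T U : Type) (S : T -> Prop) (f : {x | S x} -> U) :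
  kset K S -> kset K (fun u => exists q, f q = u).
Proof.
  apply (card_lt_inj (h := fun r : {u | exists q, f q = u} =>
           proj1_sig (constructive_indefinite_description _ (proj2_sig r)))).
  intros r1 r2 E. apply sig_eq.
  destruct (constructive_indefinite_description _ (proj2_sig r1)) as [q1 <-],
           (constructive_indefinite_description _ (proj2_sig r2)) as [q2 <-].
  simpl in E; congruence.
Qed.

Section KFrame.
Variables (K : Type) (L : kFrame K).

Local Notation "x <= y" := (kle L x y).
Local Notation "x ⊔ y" := (kjoin L x y) (at level 50, left associativity).
Local Notation "x ⊓ y" := (kmeet L x y) (at level 40, left associativity).
Local Notation "0" := (kbot L).
Local Notation "1" := (ktop L).

Lemma le_joinl x y : x <= x ⊔ y.
Proof. exact (proj1 (proj1 (kjoin_lub L x y _) (kle_refl L _))). Qed.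

Lemma le_joinr x y : y <= x ⊔ y.
Proof. exact (proj2 (proj1 (kjoin_lub L x y _) (kle_refl L _))). Qed.

Lemma join_least x y z : x <= z -> y <= z -> x ⊔ y <= z.
Proof. intros; apply kjoin_lub; auto. Qed.

Lemma le_meetl x y : x ⊓ y <= x.
Proof. exact (proj1 (proj1 (kmeet_glb L x y _) (kle_refl L _))). Qed.

Lemma le_meetr x y : x ⊓ y <= y.
Proof. exact (proj2 (proj1 (kmeet_glb L x y _) (kle_refl L _))). Qed.

Lemma meet_greatest x y z : z <= x -> z <= y -> z <= x ⊓ y.
Proof. intros; apply kmeet_glb; auto. Qed.

Local Hint Resolve le_joinl le_joinr le_meetl le_meetr kle_refl kbot_le kle_top : core.

Lemma le_joinl_trans x y z : x <= y -> x <= y ⊔ z.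
Proof. intros H; apply (kle_trans L _ _ _ H); auto. Qed.

Lemma le_joinr_trans x y z : x <= z -> x <= y ⊔ z.
Proof. intros H; apply (kle_trans L _ _ _ H); auto. Qed.

Local Hint Resolve le_joinl_trans le_joinr_trans : core.

Lemma joinC x y : x ⊔ y = y ⊔ x.
Proof. apply kle_antisym; apply join_least; auto. Qed.

Lemma meetC x y : x ⊓ y = y ⊓ x.
Proof. apply kle_antisym; apply meet_greatest; auto. Qed.

Lemma join0x x : 0 ⊔ x = x.
Proof. apply kle_antisym; auto using join_least. Qed.

Lemma joinx0 x : x ⊔ 0 = x.
Proof. rewrite joinC; apply join0x. Qed.

Lemma joinxx x : x ⊔ x = x.
Proof. apply kle_antisym; auto using join_least. Qed.

Lemma joinx1 x : x ⊔ 1 = 1.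
Proof. apply kle_antisym; auto. Qed.

Lemma meet0x x : 0 ⊓ x = 0.
Proof. apply kle_antisym; auto. Qed.

Lemma meet_idPr x y : x <= y -> y ⊓ x = x.
Proof. intros; apply kle_antisym; auto using meet_greatest. Qed.

Lemma join_absorb_le x a c : a <= c -> x ⊔ a ⊔ c = x ⊔ c.
Proof.
  intros Hac; apply kle_antisym; repeat apply join_least; auto.
Qed.

Lemma join_distr_joinl x y z : x ⊔ y ⊔ z = (x ⊔ z) ⊔ (y ⊔ z).
Proof. apply kle_antisym; repeat apply join_least; auto. Qed.

Lemma joinIr x y z : x ⊔ (y ⊓ z) = (x ⊔ y) ⊓ (x ⊔ z).
Proof.
  apply kle_antisym.
  - apply join_least; apply meet_greatest; auto.
  - rewrite kdistr. apply join_least.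
    + apply (kle_trans L _ x); auto.
    + rewrite meetC, kdistr. apply join_least.
      * apply (kle_trans L _ x); auto.
      * rewrite meetC; auto.
Qed.

Lemma joinIl x y z : (x ⊓ y) ⊔ z = (x ⊔ z) ⊓ (y ⊔ z).
Proof. rewrite joinC, joinIr, (joinC z x), (joinC z y); reflexivity. Qed.

Lemma nabla_mono a c x y : a <= c -> nabla L a x y -> nabla L c x y.
Proof.
  unfold nabla; intros Hac E.
  rewrite <- (join_absorb_le x a c Hac), <- (join_absorb_le y a c Hac), E; reflexivity.
Qed.

Lemma nabla_meet a b x y :
  nabla L a x y -> nabla L b x y -> nabla L (a ⊓ b) x y.
Proof. unfold nabla; intros E1 E2; rewrite !joinIr, E1, E2; reflexivity. Qed.

Lemma le_join_of_nabla c x y t : nabla L c x y -> y <= t -> x <= t ⊔ c.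
Proof.
  unfold nabla; intros E Hyt.
  apply (kle_trans L _ (x ⊔ c)); auto.
  rewrite E; apply join_least; auto.
Qed.

Lemma nabla_congruence c : congruence L (nabla L c).
Proof.
  unfold nabla; repeat split.
  - intros x y E; symmetry; exact E.
  - intros x y z E1 E2; rewrite E1; exact E2.
  - intros a b x y E1 E2; rewrite !joinIl, E1, E2; reflexivity.
  - intros a b x y E1 E2.
    rewrite (join_distr_joinl a x c), (join_distr_joinl b y c), E1, E2; reflexivity.
  - intros S s t _ HS [Hs_ub Hs_least] [Ht_ub Ht_least].
    apply kle_antisym; apply join_least; try apply le_joinr.
    + apply Hs_least. intros x [y Sxy].
      apply (le_join_of_nabla t (HS _ Sxy)).
      apply Ht_ub; exists x; exact Sxy.
    + apply Ht_least. intros y [x Sxy].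
      apply (le_join_of_nabla s (eq_sym (HS _ Sxy))).
      apply Hs_ub; exists y; exact Sxy.
Qed.

Lemma nabla_le_congruence (C : L -> L -> Prop) a x y :
  congruence L C -> C a 0 -> nabla L a x y -> C x y.
Proof.
  intros (Hrefl & Hsym & Htrans & _ & _ & _ & Hjoin & _) Ha E.
  assert (Hz : forall z, C (z ⊔ a) z).
  { intros z. rewrite <- (joinx0 z) at 2. apply Hjoin; auto. }
  apply (Htrans _ (x ⊔ a)); [apply Hsym, Hz |].
  unfold nabla in E; rewrite E; apply Hz.
Qed.

Lemma cong_gen_congruence (R : L -> L -> Prop) : congruence L (cong_gen L R).
Proof.
  unfold cong_gen; repeat split.
  - intros x C (Hrefl & _) _; apply Hrefl.
  - intros x y Hxy C HC HR; pose proof HC as (_ & Hsym & _).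
    exact (Hsym _ _ (Hxy C HC HR)).
  - intros x y z Hxy Hyz C HC HR; pose proof HC as (_ & _ & Htrans & _).
    exact (Htrans _ _ _ (Hxy C HC HR) (Hyz C HC HR)).
  - intros C (_ & _ & _ & Hbot & _) _; exact Hbot.
  - intros C (_ & _ & _ & _ & Htop & _) _; exact Htop.
  - intros a b c d Hab Hcd C HC HR; pose proof HC as (_ & _ & _ & _ & _ & Hmeet & _).
    exact (Hmeet _ _ _ _ (Hab C HC HR) (Hcd C HC HR)).
  - intros a b c d Hab Hcd C HC HR; pose proof HC as (_ & _ & _ & _ & _ & _ & Hjoin & _).
    exact (Hjoin _ _ _ _ (Hab C HC HR) (Hcd C HC HR)).
  - intros S s t HS HSR Hs Ht C HC HR; pose proof HC as (_ & _ & _ & _ & _ & _ & _ & Hlub).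
    apply (Hlub S); auto.
    intros p Sp; exact (HSR p Sp C HC HR).
Qed.

Lemma cong_gen_incl (R : L -> L -> Prop) x y : R x y -> cong_gen L R x y.
Proof. intros H C _ HR; auto. Qed.

Lemma nablaI_of_nabla (I : L -> Prop) a x y : I a -> nabla L a x y -> nablaI L I x y.
Proof. intros Ia E; apply cong_gen_incl; exists a; auto. Qed.

Lemma nablaI_mono (I J : L -> Prop) : set_le I J -> rel_le (nablaI L I) (nablaI L J).
Proof.
  intros HIJ x y H C HC HR. apply H; auto.
  intros a b [c [Ic E]]. apply HR. exists c; auto.
Qed.

Lemma nablaI_le_congruence (I : L -> Prop) (C : L -> L -> Prop) :
  congruence L C -> (forall a, I a -> C a 0) -> rel_le (nablaI L I) C.
Proof.
  intros HC HI x y H. apply H; auto.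
  intros a b [c [Ic E]]. exact (nabla_le_congruence HC (HI c Ic) E).
Qed.

Lemma kideal_full : kideal L (fun _ => True).
Proof. split; auto. intros S _ _. exists 1; auto. Qed.

Lemma kideal_meet (I J : L -> Prop) :
  kideal L I -> kideal L J -> kideal L (fun a => I a /\ J a).
Proof.
  intros [Idown Ibound] [Jdown Jbound]. split.
  - intros x y Hxy [Iy Jy]; eauto.
  - intros S HS HSIJ.
    destruct (Ibound S HS) as [u [Iu Hu]]; [intros x Sx; apply HSIJ, Sx |].
    destruct (Jbound S HS) as [v [Jv Hv]]; [intros x Sx; apply HSIJ, Sx |].
    exists (u ⊓ v); split.
    + split; [apply (Idown _ u) | apply (Jdown _ v)]; auto.
    + intros x Sx; apply meet_greatest; auto.
Qed.

Lemma congruence_kernel_kideal (C : L -> L -> Prop) :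
  congruence L C -> kideal L (fun a => C a 0).
Proof.
  intros HC; pose proof HC as (Hrefl & _ & _ & _ & _ & Hmeet & _ & Hlub). split.
  - intros x y Hxy Cy.
    rewrite <- (meet_idPr x y Hxy), <- (meet0x x). apply Hmeet; auto.
  - intros S HS HSC. destruct (ksup_ex L HS) as [s Hs].
    exists s; split; [| apply Hs].
    (* s ~ 0 is the kappa-join of the pairs (x, 0), x in S. *)
    set (S0 := fun p : L * L => S (fst p) /\ snd p = 0).
    apply (Hlub S0).
    + apply (card_lt_inj (h := fun p : {p | S0 p} => exist S _ (proj1 (proj2_sig p))));
        [| exact HS].
      intros [[x1 y1] [S1 E1]] [[x2 y2] [S2 E2]] E; simpl in *.
      apply sig_eq; simpl. inversion E; congruence.
    + intros [x y] [Sx E]; simpl in *; subst y; auto.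
    + destruct Hs as [Hs_ub Hs_least]; split.
      * intros x [y [Sx _]]; auto.
      * intros u Hu; apply Hs_least; intros x Sx; apply Hu; exists 0; split; auto.
    + split.
      * intros y [x [_ E]]; simpl in E; subst y; auto.
      * auto.
Qed.

Section Ideal.
Hypothesis HK : regular_card K.
Variable I : L -> Prop.
Hypothesis HI : kideal L I.

Lemma kideal_bot : I 0.
Proof.
  destruct HI as [Hdown Hbound].
  destruct (Hbound _ (kset_empty L HK)) as [u [Iu _]]; [intros _ [] |].
  apply (Hdown _ u); auto.
Qed.

Lemma kideal_join a b : I a -> I b -> I (a ⊔ b).
Proof.
  intros Ia Ib; destruct HI as [Hdown Hbound].
  destruct (Hbound _ (kset_pair a b HK)) as [u [Iu Hu]]; [intros x [-> | ->]; auto |].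
  apply (Hdown _ u); auto. apply join_least; apply Hu; auto.
Qed.

Lemma kideal_bound_witnesses (T : Type) (S : T -> Prop) (R : T -> L -> Prop) :
  kset K S -> (forall p, S p -> exists a, I a /\ R p a) ->
  exists c, I c /\ forall p, S p -> exists a, a <= c /\ R p a.
Proof.
  intros HS Hwit.
  set (w := fun q : {p | S p} =>
              constructive_indefinite_description _ (Hwit _ (proj2_sig q))).
  destruct (proj2 HI (fun a => exists q, proj1_sig (w q) = a)) as [c [Ic Hc]].
  - exact (kset_image (fun q => proj1_sig (w q)) HS).
  - intros a [q <-]; exact (proj1 (proj2_sig (w q))).
  - exists c; split; auto. intros p Sp.
    set (q := exist S p Sp).
    exists (proj1_sig (w q)); split.
    + apply Hc; exists q; reflexivity.
    + exact (proj2 (proj2_sig (w q))).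
Qed.

Lemma nabla_pair_witness a b x y z t : I a -> I b ->
  nabla L a x y -> nabla L b z t ->
  exists c, I c /\ nabla L c x y /\ nabla L c z t.
Proof.
  intros Ia Ib E1 E2. exists (a ⊔ b); split; [apply kideal_join; auto |].
  split; [apply (nabla_mono (a := a)) | apply (nabla_mono (a := b))]; auto.
Qed.

Lemma nabla_union_congruence :
  congruence L (fun x y => exists a, I a /\ nabla L a x y).
Proof.
  pose proof kideal_bot as I0.
  assert (Hrefl : forall x, exists a, I a /\ nabla L a x x)
    by (intros x; exists 0; split; [exact I0 | reflexivity]).
  repeat split; auto.
  - intros x y [a [Ia E]]; exists a; split; auto; symmetry; exact E.
  - intros x y z [a [Ia E1]] [b [Ib E2]].
    destruct (nabla_pair_witness Ia Ib E1 E2) as [c [Ic [F1 F2]]].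
    exists c; split; auto. unfold nabla in *; congruence.
  - intros x y z t [a [Ia E1]] [b [Ib E2]].
    destruct (nabla_pair_witness Ia Ib E1 E2) as [c [Ic [F1 F2]]].
    exists c; split; auto. apply (nabla_congruence c); auto.
  - intros x y z t [a [Ia E1]] [b [Ib E2]].
    destruct (nabla_pair_witness Ia Ib E1 E2) as [c [Ic [F1 F2]]].
    exists c; split; auto. apply (nabla_congruence c); auto.
  - intros S s t HS HSI Hs Ht.
    destruct (kideal_bound_witnesses (fun p a => nabla L a (fst p) (snd p)) HS HSI)
      as [c [Ic Hc]].
    exists c; split; auto.
    apply (nabla_congruence c) with S; auto.
    intros p Sp; destruct (Hc p Sp) as [a [Hac E]]; exact (nabla_mono c Hac E).
Qed.

Lemma nablaI_iff x y : nablaI L I x y <-> exists a, I a /\ nabla L a x y.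
Proof.
  split.
  - intros H; apply H; [exact nabla_union_congruence | auto].
  - intros [a [Ia E]]; exact (nablaI_of_nabla I Ia E).
Qed.

Lemma nablaI_kernel a : nablaI L I a 0 <-> I a.
Proof.
  rewrite nablaI_iff; split.
  - intros [b [Ib E]]. unfold nabla in E; rewrite join0x in E.
    apply (proj1 HI a b); auto. rewrite <- E; auto.
  - intros Ia; exists a; split; auto.
    unfold nabla; rewrite joinxx, join0x; reflexivity.
Qed.

End Ideal.

End KFrame.

Theorem mainTheorem2 (K : Type) (HK : regular_card K) (L : kFrame K) :
  (* nabla_I is a congruence (the map lands in CL) *)
  (forall I, kideal L I -> congruence L (nablaI L I)) /\
  (* injective *)
  (forall I J, kideal L I -> kideal L J ->
     (forall x y, nablaI L I x y <-> nablaI L J x y) ->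
     forall a, I a <-> J a) /\
  (* preserves the top element (empty meet) *)
  (forall M, glb_in set_le (kideal L) (fun e : Empty_set => match e with end) M ->
     glb_in rel_le (congruence L) (fun e : Empty_set => match e with end)
       (nablaI L M)) /\
  (* preserves binary meets *)
  (forall I J M, kideal L I -> kideal L J ->
     glb_in set_le (kideal L) (fun b : bool => if b then I else J) M ->
     glb_in rel_le (congruence L)
       (fun b : bool => if b then nablaI L I else nablaI L J) (nablaI L M)) /\
  (* preserves arbitrary joins *)
  (forall (X : Type) (F : X -> L -> Prop) M,
     (forall j, kideal L (F j)) ->
     lub_in set_le (kideal L) F M ->
     lub_in rel_le (congruence L) (fun j => nablaI L (F j)) (nablaI L M)).
Proof.
  split; [| split; [| split; [| split]]].
  - intros I _; apply cong_gen_congruence.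
  - intros I J HI HJ H a.
    rewrite <- (nablaI_kernel HK HI), <- (nablaI_kernel HK HJ); apply H.
  - intros M [_ [_ HM_greatest]].
    split; [apply cong_gen_congruence | split; [intros [] |]].
    intros C _ _ x y _. apply (nablaI_of_nabla M (a := ktop L)).
    + apply (HM_greatest _ (kideal_full L)); [intros [] | exact I].
    + unfold nabla; rewrite !joinx1; reflexivity.
  - intros I J M HI HJ [_ [HM_lb HM_greatest]].
    split; [apply cong_gen_congruence | split].
    + intros [|]; apply nablaI_mono; [exact (HM_lb true) | exact (HM_lb false)].
    + intros C _ HC x y Cxy.
      destruct (proj1 (nablaI_iff HK HI x y) (HC true _ _ Cxy)) as [a [Ia Ea]].
      destruct (proj1 (nablaI_iff HK HJ x y) (HC false _ _ Cxy)) as [b [Jb Eb]].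
      apply (nablaI_of_nabla M (a := kmeet L a b)); [| exact (nabla_meet Ea Eb)].
      apply (HM_greatest _ (kideal_meet HI HJ)); [intros [|] c [Ic Jc]; auto |].
      split; [apply (proj1 HI _ a) | apply (proj1 HJ _ b)]; auto using le_meetl, le_meetr.
  - intros X F M HF [_ [HF_le HM_least]].
    split; [apply cong_gen_congruence | split].
    + intros j; apply nablaI_mono, HF_le.
    + intros C HC HFC. apply (nablaI_le_congruence HC).
      apply (HM_least _ (congruence_kernel_kideal HC)).
      intros j a Fa. apply (HFC j), (nablaI_kernel HK (HF j)), Fa.
Qed.
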